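(* Let $A\in\mathbb{R}^{n\times m}$ with $n\ge 2$ be such that the DSR graph $G_{A,A^t}$ is steady. (i) If each column of $A$ has at most two nonzero entries, then for every $B\in\mathcal{Q}_0(A^t)$, both $AB$ and $(AB)^{[2]}$ are $P_0$-matrices, and $AB$ is positive semistable. (ii) If each row of $A$ has at most two nonzero entries, then for every $B\in\mathcal{Q}_0(A^t)$, $AB$ is positive semistable.
   Context: For $M\in\mathbb{R}^{n\times m}$, $\mathcal{Q}(M)$ is the set of matrices with the same entrywise sign pattern as $M$, and $\mathcal{Q}_0(M)$ its closure. A square real matrix is a $P_0$-matrix if all principal minors are nonnegative; it is positive semistable if all its eigenvalues have nonnegative real part. For $M\in\mathbb{R}^{n\times n}$, $M^{[2]}$ is the second additive compound: the matrix of $u\wedge v\mapsto Mu\wedge v+u\wedge Mv$ on $\Lambda^2\mathbb{R}^n$ in the lexicographically ordered basis $e_i\wedge e_j$, $i<j$. DSR graphs: for $A\in\mathbb{R}^{n\times m}$, $B\in\mathbb{R}^{m\times n}$, $G_{A,B}$ is the signed, labelled bipartite digraph with S-vertices $S_1,\dots,S_n$ and R-vertices $R_1,\dots,R_m$, having an arc $R_j\to S_i$ of sign $\mathrm{sign}(A_{ij})$ iff $A_{ij}\ne0$, and an arc $S_i\to R_j$ of sign $\mathrm{sign}(B_{ji})$ iff $B_{ji}\ne0$. Antiparallel arcs between the same pair of vertices with the same sign are regarded as a single undirected edge. An edge arising from $A_{ij}\ne0$ (R-to-S or undirected) has label $|A_{ij}|$; an edge with only S-to-R orientation has label $\infty$.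 A cycle is a nonempty closed walk (traversing edges consistently with their orientations) repeating no vertex except first$=$last. A cycle $(e_1,\dots,e_{2r})$ is an s-cycle if all labels are finite and $\prod_{i=1}^r l(e_{2i-1})=\prod_{i=1}^r l(e_{2i})$. A DSR graph is steady if all of its cycles are s-cycles. *)

From HB Require Import structures.
From mathcomp Require Import all_boot all_order all_algebra.
From mathcomp Require Import complex.
From mathcomp Require Import reals.
Set Implicit Arguments. Unset Strict Implicit. Unset Printing Implicit Defensive.
Import Order.TTheory GRing.Theory Num.Theory.
Local Open Scope ring_scope.

Section Defs.
Variable R : realType.

Definition signQ (p q : nat) (M N : 'M[R]_(p, q)) : Prop :=
  forall i j, Num.sg (N i j) = Num.sg (M i j).
(* Q_0(M): closure of Q(M), i.e. matrices whose every entry is either 0 or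
   has the sign of the corresponding entry of M *)
Definition signQ0 (p q : nat) (M N : 'M[R]_(p, q)) : Prop :=
  forall i j, N i j = 0 \/ Num.sg (N i j) = Num.sg (M i j).

Definition principal_submx (k : nat) (M : 'M[R]_k) (S : {set 'I_k}) :
    'M[R]_#|S| :=
  mxsub (fun a : 'I_#|S| => enum_val a) (fun a : 'I_#|S| => enum_val a) M.

Definition P0_matrix (k : nat) (M : 'M[R]_k) : Prop :=
  forall S : {set 'I_k}, 0 <= \det (principal_submx M S).

Definition pos_semistable (k : nat) (M : 'M[R]_k) : Prop :=
  forall z : R[i], eigenvalue (map_mx (real_complex R) M) z -> 0 <= complex.Re z.

(* index set of the basis e_i /\ e_j, i < j, of Lambda^2 R^k; the finType
   enumeration of this subtype of 'I_k * 'I_k is lexicographic *)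
Definition idx2 (k : nat) := {p : 'I_k * 'I_k | (p.1 < p.2)%N}.

(* coefficient on e_i /\ e_j of  M e_k' /\ e_l + e_k' /\ M e_l *)
Definition compound2_entry (k : nat) (M : 'M[R]_k) (a b : idx2 k) : R :=
  let: (i, j) := val a in let: (k', l) := val b in
  (if l == j then M i k' else 0) - (if l == i then M j k' else 0)
  + (if k' == i then M j l else 0) - (if k' == j then M i l else 0).

Definition compound2 (k : nat) (M : 'M[R]_k) : 'M[R]_#|{: idx2 k}| :=
  \matrix_(a, b) compound2_entry M (enum_val a) (enum_val b).

(* vertices: inl i = S_(i+1), inr j = R_(j+1) *)
Definition dsr_vtx (n m : nat) := ('I_n + 'I_m)%type.

(* [dsr_trav A B u v] = None if no edge of G_{A,B} can be traversed from u
   to v; Some l if one can, where l is its label (Some x = finite label x,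
   None = infinity).  Between an ordered pair of vertices at most one edge
   can be traversed in that direction:
   - S_i -> R_j : the arc from B_ji <> 0; it is merged with the arc
     R_j -> S_i into an undirected edge (label |A_ij|) iff A_ij <> 0 and
     sign A_ij = sign B_ji, otherwise it is an S-to-R arc (label infinity);
   - R_j -> S_i : the arc (or undirected edge) from A_ij <> 0, label |A_ij|. *)
Definition dsr_trav (n m : nat) (A : 'M[R]_(n, m)) (B : 'M[R]_(m, n))
    (u v : dsr_vtx n m) : option (option R) :=
  match u, v with
  | inl i, inr j =>
      if B j i != 0 then
        Some (if (A i j != 0) && (Num.sg (A i j) == Num.sg (B j i))
              then Some `|A i j| else None)
      else None
  | inr j, inl i => if A i j != 0 then Some (Some `|A i j|) else None
  | _, _ => None
  end.

Definition dsr_cycle (n m : nat) (A : 'M[R]_(n, m)) (B : 'M[R]_(m, n))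
    (k : nat) (c : 'I_k -> dsr_vtx n m) : Prop :=
  (0 < k)%N /\ injective c /\ forall t : 'I_k, dsr_trav A B (c t) (c (ordS t)) != None.

(* label of the t-th edge of the cycle (0 if infinite or absent) *)
Definition dsr_cycle_label (n m : nat) (A : 'M[R]_(n, m)) (B : 'M[R]_(m, n))
    (k : nat) (c : 'I_k -> dsr_vtx n m) (t : 'I_k) : R :=
  odflt 0 (odflt None (dsr_trav A B (c t) (c (ordS t)))).

Definition dsr_s_cycle (n m : nat) (A : 'M[R]_(n, m)) (B : 'M[R]_(m, n))
    (k : nat) (c : 'I_k -> dsr_vtx n m) : Prop :=
  (forall t : 'I_k, exists x : R, dsr_trav A B (c t) (c (ordS t)) = Some (Some x)) /\
  \prod_(t < k | ~~ odd t) dsr_cycle_label A B c t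
    = \prod_(t < k | odd t) dsr_cycle_label A B c t.

Definition dsr_steady (n m : nat) (A : 'M[R]_(n, m)) (B : 'M[R]_(m, n)) : Prop :=
  forall (k : nat) (c : 'I_k -> dsr_vtx n m), dsr_cycle A B c -> dsr_s_cycle A B c.

End Defs.

(* Steadiness of G_{A,A^T} says that around every cycle of the bipartite
   graph of the support of A the alternating product of the labels |A_ij|
   is 1.  Hence these labels are a multiplicative coboundary: there are
   positive rho, sig with |A_ij| rho_i sig_j = 1 wherever A_ij <> 0.  When
   every column of A has at most two nonzero entries, this makes AB, for
   B in Q_0(A^T), column diagonally dominant with respect to the weights rho.
   Weighted column dominance passes to principal submatrices and to the
   second additive compound (with weights rho_i rho_j), it confines the
   eigenvalues to the closed right half-plane (Gershgorin), and hence, by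
   deforming the matrix to the identity, it forces a nonnegative determinant.
   In case (ii) the same argument applies to A^T B^T, whose nonzero
   eigenvalues are those of AB. *)

From HB Require Import structures.
From mathcomp Require Import all_boot all_order all_algebra.
From mathcomp Require Import complex.
From mathcomp Require Import reals.
From mathcomp Require Import zify ring lra.
Set Implicit Arguments. Unset Strict Implicit. Unset Printing Implicit Defensive.
Import Order.TTheory GRing.Theory Num.Theory.
Local Open Scope ring_scope.

Lemma not_uniq_cat (T : eqType) (s : seq T) : ~~ uniq s ->
  exists s1 z s2 s3, s = s1 ++ z :: s2 ++ z :: s3.
Proof.
elim: s => [|a s IH] //=; rewrite negb_and negbK => /orP[/splitPr[p1 p2]|/IH].
  by exists [::], a, p1, p2.
by case=> s1 [z [s2 [s3 ->]]]; exists (a :: s1), z, s2, s3.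
Qed.

Lemma last_rev_belast (T : Type) (x : T) s : last (last x s) (rev (belast x s)) = x.
Proof. by elim: s x => [|y s IH] x //=; rewrite rev_cons last_rcons. Qed.

Lemma nth_ordS (T : Type) (x : T) s (t : 'I_(size s).+1) :
  nth x (x :: s) (ordS t) = nth x (rcons s x) t.
Proof.
rewrite nth_rcons /=; have [ts|] := ltnP t (size s).
  by rewrite modn_small.
move=> st; have ts : val t = size s by apply/eqP; rewrite eqn_leq st -ltnS ltn_ord.
have -> : (t.+1 %% (size s).+1 = 0)%N by rewrite ts modnn.
by case: eqP.
Qed.

(** * Potentials on graphs whose cycles have weight one *)

Section WalkWeight.
Variables (R : realFieldType) (V : finType) (e : rel V) (w : V -> V -> R).
Hypothesis e_sym : symmetric e.
Hypothesis w_gt0 : forall x y, e x y -> 0 < w x y.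
Hypothesis w_flip : forall x y, e x y -> w y x = (w x y)^-1.

Fixpoint walk_weight (x : V) (s : seq V) : R :=
  if s is y :: s' then w x y * walk_weight y s' else 1.

Lemma walk_weight_cat x s t :
  walk_weight x (s ++ t) = walk_weight x s * walk_weight (last x s) t.
Proof. by elim: s x => [|y s IH] x /=; rewrite ?mul1r // IH mulrA. Qed.

Lemma walk_weight_rcons x s y :
  walk_weight x (rcons s y) = walk_weight x s * w (last x s) y.
Proof. by rewrite -cats1 walk_weight_cat /= mulr1. Qed.

Lemma walk_weight_nth d x s :
  walk_weight x s = \prod_(t < size s) w (nth d (x :: s) t) (nth d s t).
Proof.
by elim: s x => [|y s IH] x /=; rewrite ?big_ord0 // big_ord_recl /= IH.
Qed.

Lemma walk_weight_gt0 x s : path e x s -> 0 < walk_weight x s.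
Proof.
elim: s x => [|y s IH] x /=; first by rewrite ltr01.
by case/andP=> exy ps; rewrite mulr_gt0 ?w_gt0 ?IH.
Qed.

Lemma walk_weight_rev x s : path e x s ->
  walk_weight (last x s) (rev (belast x s)) = (walk_weight x s)^-1.
Proof.
elim: s x => [|y s IH] x /=; first by rewrite invr1.
case/andP=> exy ps.
by rewrite rev_cons walk_weight_rcons IH // last_rev_belast w_flip // invfM mulrC.
Qed.

Hypothesis cycle_weight : forall x s,
  path e x (rcons s x) -> uniq (rcons s x) -> walk_weight x (rcons s x) = 1.

(* A closed walk that is not a cycle splits at a repeated vertex into two
   shorter closed walks. *)
Lemma closed_walk_weight x s : path e x s -> last x s = x -> walk_weight x s = 1.
Proof.
elim: {s}(size s) {-2}s (leqnn (size s)) x => [|N IH] s sN x.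
  by move: sN; rewrite leqn0 => /nilP ->.
move=> ps ls; have [us|/not_uniq_cat[s1 [z [s2 [s3 eqs]]]]] := boolP (uniq s).
  case/lastP: s sN ps ls us => [|s' y] //= _ ps.
  by rewrite last_rcons => yx; move: ps; rewrite yx; apply: cycle_weight.
move: ps ls sN; rewrite eqs !(cat_path, last_cat, size_cat) /=.
rewrite !(cat_path, last_cat, size_cat) /= => /and5P[p1 e1 p2 e2 p3] ls sN.
have inner : walk_weight z (rcons s2 z) = 1.
  by apply: IH; rewrite ?size_rcons ?rcons_path ?p2 ?last_rcons //; lia.
have outer : walk_weight x (s1 ++ z :: s3) = 1.
  by apply: IH; rewrite ?size_cat ?cat_path ?p1 ?last_cat //= ?e1; lia.
rewrite walk_weight_rcons in inner; rewrite walk_weight_cat /= in outer.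
rewrite walk_weight_cat /= walk_weight_cat /=.
have -> : walk_weight x s1 * (w (last x s1) z *
            (walk_weight z s2 * (w (last z s2) z * walk_weight z s3)))
  = walk_weight x s1 * (w (last x s1) z * walk_weight z s3) *
    (walk_weight z s2 * w (last z s2) z) by ring.
by rewrite outer inner mulr1.
Qed.

Lemma walk_weight_eq x s t : path e x s -> path e x t -> last x s = last x t ->
  walk_weight x s = walk_weight x t.
Proof.
move=> ps pt lst.
have pt' : path e (last x t) (rev (belast x t)).
  by rewrite rev_path; apply: sub_path pt => a b /=; rewrite e_sym.
have := @closed_walk_weight x (s ++ rev (belast x t)).
rewrite cat_path ps last_cat lst pt' last_rev_belast walk_weight_cat lst.
by rewrite walk_weight_rev // => /(_ isT erefl) /divr1_eq.
Qed.

Lemma exists_walk_from_root y :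
  exists s, path e (fingraph.root e y) s && (last (fingraph.root e y) s == y).
Proof.
have /connectP[s ps ly] : connect e (fingraph.root e y) y.
  by rewrite (sym_connect_sym e_sym) connect_root.
by exists s; rewrite ps -ly eqxx.
Qed.

(* Independent of the chosen walk, by [walk_weight_eq]. *)
Definition potential (y : V) : R :=
  walk_weight (fingraph.root e y) (xchoose (exists_walk_from_root y)).

Lemma potential_gt0 y : 0 < potential y.
Proof.
by have /andP[ps _] := xchooseP (exists_walk_from_root y); apply: walk_weight_gt0.
Qed.

Lemma potential_edge x y : e x y -> potential y = potential x * w x y.
Proof.
move=> exy; have rxy : fingraph.root e x = fingraph.root e y.
  by apply/(fingraph.rootP (sym_connect_sym e_sym)); apply: connect1.
rewrite /potential.
move: (xchooseP (exists_walk_from_root x)) (xchooseP (exists_walk_from_root y)).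
move: (xchoose (exists_walk_from_root x)) (xchoose (exists_walk_from_root y)).
rewrite -rxy => sx sy /andP[px /eqP lx] /andP[py /eqP ly].
have -> : walk_weight (fingraph.root e x) sx * w x y
    = walk_weight (fingraph.root e x) (rcons sx y) by rewrite walk_weight_rcons lx.
apply: walk_weight_eq => //.
  by rewrite rcons_path px lx exy.
by rewrite last_rcons ly.
Qed.

End WalkWeight.

(** * A diagonal scaling from steadiness *)

Lemma prodf_alternate_eq1 (R : numFieldType) (k : nat) (l : 'I_k -> R) (b : bool) :
  (forall t, 0 < l t) ->
  \prod_(t < k | ~~ odd t) l t = \prod_(t < k | odd t) l t ->
  \prod_(t < k) (if b (+) odd t then l t else (l t)^-1) = 1.
Proof.
move=> l_gt0 l_even_odd; rewrite (bigID (fun t : 'I_k => odd t)) /=.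
have odd_neq0 : \prod_(t < k | odd t) l t != 0.
  by rewrite gt_eqF // prodr_gt0.
case: b.
  rewrite (eq_bigr (fun t => (l t)^-1)) => [|t -> //].
  rewrite [X in _ * X](eq_bigr l) => [|t /negbTE -> //].
  by rewrite prodfV l_even_odd mulVf.
rewrite (eq_bigr l) => [|t -> //].
rewrite [X in _ * X](eq_bigr (fun t => (l t)^-1)) => [|t /negbTE -> //].
by rewrite prodfV l_even_odd mulfV.
Qed.

Definition unit_scaling (R : numFieldType) (n m : nat) (A : 'M[R]_(n, m))
    (rho : 'I_n -> R) (sig : 'I_m -> R) : Prop :=
  [/\ forall i, 0 < rho i, forall j, 0 < sig j &
      forall i j, A i j != 0 -> `|A i j| * rho i * sig j = 1].

Lemma unit_scaling_tr (R : numFieldType) n m (A : 'M[R]_(n, m)) rho sig :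
  unit_scaling A rho sig -> unit_scaling A^T sig rho.
Proof. by case=> rho_gt0 sig_gt0 As; split=> // j i; rewrite mxE mulrAC; apply: As. Qed.

Section SteadyScaling.
Variables (R : realType) (n m : nat) (A : 'M[R]_(n, m)).

Definition dsr_adj (u v : dsr_vtx n m) : bool := dsr_trav A A^T u v != None.
Definition dsr_label (u v : dsr_vtx n m) : R := odflt 0 (odflt None (dsr_trav A A^T u v)).
Definition is_svtx (u : dsr_vtx n m) : bool := if u is inl _ then true else false.
(* Around a cycle, the product of these weights is the quotient of the two
   alternating label products of the s-cycle condition. *)
Definition dsr_weight (u v : dsr_vtx n m) : R :=
  if is_svtx u then dsr_label u v else (dsr_label u v)^-1.

(* With [B = A^T] every arc of the DSR graph is half of an undirected edge. *)
Lemma dsr_adj_lr i j : dsr_adj (inl i) (inr j) = (A i j != 0).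
Proof. by rewrite /dsr_adj /= mxE; case: (A i j != 0). Qed.

Lemma dsr_adj_rl i j : dsr_adj (inr j) (inl i) = (A i j != 0).
Proof. by rewrite /dsr_adj /=; case: (A i j != 0). Qed.

Lemma dsr_adj_sym : symmetric dsr_adj.
Proof. by case=> [i|j] [i'|j'] //; rewrite dsr_adj_lr dsr_adj_rl. Qed.

Lemma dsr_adj_svtx u v : dsr_adj u v -> is_svtx v = ~~ is_svtx u.
Proof. by case: u v => [i|j] [i'|j']. Qed.

Lemma dsr_label_lr i j : dsr_label (inl i) (inr j) = `|A i j|.
Proof.
rewrite /dsr_label /= mxE.
by have [->|_] := eqVneq (A i j) 0; rewrite ?normr0 //= eqxx.
Qed.

Lemma dsr_label_rl i j : dsr_label (inr j) (inl i) = `|A i j|.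
Proof.
by rewrite /dsr_label /=; have [->|_] := eqVneq (A i j) 0; rewrite ?normr0.
Qed.

Lemma dsr_label_gt0 u v : dsr_adj u v -> 0 < dsr_label u v.
Proof.
case: u v => [i|j] [i'|j'] //.
  by rewrite dsr_adj_lr dsr_label_lr normr_gt0.
by rewrite dsr_adj_rl dsr_label_rl normr_gt0.
Qed.

Lemma dsr_weight_gt0 u v : dsr_adj u v -> 0 < dsr_weight u v.
Proof. by move/dsr_label_gt0; rewrite /dsr_weight; case: ifP; rewrite ?invr_gt0. Qed.

Lemma dsr_weight_flip u v : dsr_adj u v -> dsr_weight v u = (dsr_weight u v)^-1.
Proof.
case: u v => [i|j] [i'|j'] //= _.
  by rewrite /dsr_weight /= dsr_label_lr dsr_label_rl.
by rewrite /dsr_weight /= dsr_label_lr dsr_label_rl invrK.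
Qed.

Section ClosedPath.
Variables (x : dsr_vtx n m) (s : seq (dsr_vtx n m)).
Hypothesis x_path : path dsr_adj x (rcons s x).

Lemma dsr_adj_nth t :
  (t <= size s)%N -> dsr_adj (nth x (x :: s) t) (nth x (rcons s x) t).
Proof.
move=> ts; have := pathP x x_path t.
by rewrite size_rcons ltnS ts -rcons_cons nth_rcons /= ltnS ts; apply.
Qed.

Lemma is_svtx_nth t : (t <= size s)%N -> is_svtx (nth x (x :: s) t) = is_svtx x (+) odd t.
Proof.
elim: t => [|t IH] ts; first by rewrite addbF.
have /dsr_adj_svtx := dsr_adj_nth (ltnW ts).
by rewrite nth_rcons ts /= => ->; rewrite IH ?(ltnW ts) // addbN.
Qed.

Hypothesis x_uniq : uniq (x :: s).

Let c (t : 'I_(size s).+1) : dsr_vtx n m := nth x (x :: s) t.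

Lemma dsr_adj_ordS (t : 'I_(size s).+1) : dsr_adj (c t) (c (ordS t)).
Proof. by rewrite /c nth_ordS dsr_adj_nth // -ltnS. Qed.

Lemma dsr_cycle_nth : dsr_cycle A A^T c.
Proof.
split=> //; split=> [t1 t2 /eqP|t]; last exact: dsr_adj_ordS.
by rewrite /c nth_uniq // => /eqP /val_inj.
Qed.

Hypothesis A_steady : dsr_steady A A^T.

Lemma steady_closed_path_weight : walk_weight dsr_weight x (rcons s x) = 1.
Proof.
rewrite (walk_weight_nth _ x) size_rcons.
have [_ even_odd] := A_steady dsr_cycle_nth.
rewrite -[RHS](prodf_alternate_eq1 (is_svtx x) _ even_odd) => [|t]; last first.
  exact/dsr_label_gt0/dsr_adj_ordS.
apply: eq_bigr => t _; rewrite -rcons_cons nth_rcons /= ltn_ord -nth_ordS.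
by rewrite /dsr_weight is_svtx_nth // -ltnS.
Qed.

End ClosedPath.

Lemma steady_unit_scaling : dsr_steady A A^T ->
  exists rho sig, unit_scaling A rho sig.
Proof.
move=> A_steady.
have cycle_weight x s : path dsr_adj x (rcons s x) -> uniq (rcons s x) ->
    walk_weight dsr_weight x (rcons s x) = 1.
  by rewrite rcons_uniq => x_path x_uniq; apply: steady_closed_path_weight.
pose p := potential dsr_weight dsr_adj_sym.
have p_gt0 y : 0 < p y := potential_gt0 dsr_adj_sym dsr_weight_gt0 y.
exists (fun i => p (inl i)), (fun j => (p (inr j))^-1); split=> // [j|i j nz].
  by rewrite invr_gt0.
have e_ij : dsr_adj (inl i) (inr j) by rewrite dsr_adj_lr.
rewrite /p (potential_edge dsr_adj_sym dsr_weight_flip cycle_weight e_ij) -/p.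
rewrite /dsr_weight /= dsr_label_lr [X in X / _]mulrC divff //.
by rewrite mulf_neq0 ?gt_eqF ?normr_gt0.
Qed.

End SteadyScaling.

(** * Weighted column diagonal dominance *)

Definition col_dominant (R : numDomainType) k (M : 'M[R]_k) (rho : 'I_k -> R) : Prop :=
  (forall i, 0 < rho i) /\
  forall j, \sum_(i | i != j) `|M i j| * rho i <= M j j * rho j.

Lemma same_sign_mulr_norm (R : realDomainType) (x y : R) :
  y = 0 \/ Num.sg y = Num.sg x -> x * y = `|x| * `|y|.
Proof.
case=> [->|sg_yx]; first by rewrite !mulr0 normr0 mulr0.
by rewrite -normrM ger0_norm // -sgr_ge0 sgrM sg_yx -expr2 sqr_ge0.
Qed.

(* On the support of a column of a unit-scaled matrix the weighted entries
   [|A i k| rho i] all equal [sig k ^-1]. *)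
Lemma unit_scaling_col_sum (R : numFieldType) n m (A : 'M[R]_(n, m)) rho sig
    (j : 'I_n) (k : 'I_m) :
  unit_scaling A rho sig -> (#|[set i | A i k != 0%R]| <= 2)%N -> A j k != 0 ->
  \sum_(i | i != j) `|A i k| * rho i <= `|A j k| * rho j.
Proof.
case=> _ sig_gt0 As col Ajk.
have supp_eq i : A i k != 0 -> `|A i k| * rho i = (sig k)^-1.
  move=> nz; apply: (mulIf (lt0r_neq0 (sig_gt0 k))).
  by rewrite As // mulVf ?gt_eqF.
rewrite supp_eq // (bigID (fun i => A i k != 0)) /=.
rewrite [X in _ + X]big1 ?addr0 => [|i /andP[_ /negPn/eqP->]]; last first.
  by rewrite normr0 mul0r.
rewrite (eq_bigr (fun _ => (sig k)^-1)) => [|i /andP[_]]; last exact: supp_eq.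
rewrite (eq_bigl (mem ([set i | A i k != 0] :\ j))) => [|i]; last first.
  by rewrite !inE.
have : (#|[set i | A i k != 0%R] :\ j| <= 1)%N.
  by move: col; rewrite (cardsD1 j) inE Ajk.
rewrite sumr_const; case: #|_| => [|[|]] //= _; rewrite ?mulr1n //.
by rewrite invr_ge0 ltW.
Qed.

Lemma signQ0_tr (R : realType) p q (M N : 'M[R]_(p, q)) : signQ0 M N -> signQ0 M^T N^T.
Proof. by move=> MN j i; rewrite !mxE. Qed.

Lemma col_dominant_mulmx (R : realType) n m (A : 'M[R]_(n, m)) (B : 'M[R]_(m, n))
    rho sig :
  unit_scaling A rho sig -> (forall k, #|[set i | A i k != 0%R]| <= 2)%N ->
  signQ0 A^T B -> col_dominant (A *m B) rho.
Proof.
move=> As col sB; have [rho_gt0 _ _] := As; split=> // j.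
have sB_j k : B k j = 0 \/ Num.sg (B k j) = Num.sg (A j k).
  by have := sB k j; rewrite mxE.
have col_bound k : `|B k j| * \sum_(i | i != j) `|A i k| * rho i
                    <= `|B k j| * (`|A j k| * rho j).
  have [->|Bnz] := eqVneq (B k j) 0; first by rewrite normr0 !mul0r.
  rewrite ler_wpM2l // (unit_scaling_col_sum As) // -sgr_eq0.
  by case: (sB_j k) => [/eqP|<-]; rewrite ?sgr_eq0 ?(negbTE Bnz).
have -> : (A *m B) j j * rho j = \sum_k `|B k j| * (`|A j k| * rho j).
  rewrite mxE mulr_suml; apply: eq_bigr => k _.
  by rewrite (same_sign_mulr_norm (sB_j k)) mulrCA mulrA.
apply: le_trans (ler_sum _ (fun k _ => col_bound k)).
under [X in _ <= X]eq_bigr => k _ do rewrite mulr_sumr.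
rewrite exchange_big /=; apply: ler_sum => i _.
rewrite mxE; apply: le_trans (ler_wpM2r (ltW (rho_gt0 i)) (ler_norm_sum _ _ _)) _.
rewrite mulr_suml; apply: ler_sum => k _.
by rewrite normrM mulrAC mulrC mulrA.
Qed.

Section Gershgorin.
Variable R : rcfType.
Local Open Scope complex_scope.

Lemma Re_ge0_of_norm_subr_le (z : R[i]) (d : R) :
  `|z - d%:C| <= d%:C -> 0 <= complex.Re z.
Proof.
move=> /(le_trans (normc_ge_Re _)); rewrite lecR.
by case: z => a b /=; rewrite ler_norml lerBrDr addNr => /andP[].
Qed.

Lemma normr_real_complex (x : R) : `|x%:C| = `|x|%:C.
Proof. by rewrite normc_def /= expr0n addr0 sqrtr_sqr. Qed.

Lemma row_neq0_entry k (v : 'rV[R[i]]_k) : v != 0 -> exists i, v 0 i != 0.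
Proof.
move=> v_neq0; case: (pickP (fun i => v 0 i != 0)) => [i vi|v0]; first by exists i.
by case/eqP: v_neq0; apply/rowP => i; rewrite mxE; apply/eqP/negbFE/v0.
Qed.

(* Gershgorin's theorem for left eigenvectors, at an entry of [v] of
   maximal weighted modulus [|v i| / rho i]. *)
Lemma col_dominant_eigen_Re_ge0 k (M : 'M[R]_k) rho (z : R[i]) (v : 'rV[R[i]]_k) :
  col_dominant M rho -> v != 0 -> v *m map_mx (real_complex R) M = z *: v -> 0 <= complex.Re z.
Proof.
move=> [rho_gt0 Mdom] /row_neq0_entry[i0 vi0] v_eig.
pose a i := complex.Re `|v 0 i|.
have aE i : `|v 0 i| = (a i)%:C by rewrite RRe_real ?normr_real.
have [j _ jmax] := @arg_maxP _ _ 'I_k i0 predT (fun i => a i / rho i) isT.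
set c := a j / rho j in jmax.
have a_le i : a i <= c * rho i by rewrite -ler_pdivrMr //; apply: jmax.
have c_gt0 : 0 < c.
  apply: lt_le_trans (jmax i0 isT); rewrite divr_gt0 //.
  by rewrite -ltcR -aE normr_gt0.
have ajE : a j = c * rho j by rewrite divfK ?lt0r_neq0.
have v_j : (z - (M j j)%:C) * v 0 j = \sum_(i | i != j) v 0 i * (M i j)%:C.
  have := congr1 (fun X : 'rV_k => X 0 j) v_eig; rewrite /= !mxE (bigD1 j) //= mxE.
  by under eq_bigr => i _ do rewrite mxE; rewrite mulrBl => <-; ring.
have dist_le : `|z - (M j j)%:C| * (a j)%:C <= (M j j * a j)%:C.
  rewrite -aE -normrM v_j; apply: le_trans (ler_norm_sum _ _ _) _.
  rewrite (_ : \sum_(i | i != j) _ = (\sum_(i | i != j) a i * `|M i j|)%:C); last first.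
    by rewrite rmorph_sum; apply: eq_bigr => i _; rewrite normrM aE normr_real_complex -rmorphM.
  rewrite lecR (le_trans _ (_ : c * \sum_(i | i != j) `|M i j| * rho i <= _)) //.
    rewrite mulr_sumr; apply: ler_sum => i _; rewrite mulrCA mulrC.
    by apply: ler_wpM2l; [exact: normr_ge0 | exact: a_le].
  by rewrite ajE mulrCA; apply: ler_wpM2l; [exact: ltW | exact: Mdom].
apply: (@Re_ge0_of_norm_subr_le _ (M j j)).
by move: dist_le; rewrite rmorphM ler_pM2r // ltcR ajE mulr_gt0.
Qed.

Lemma col_dominant_eigen_ge0 k (M : 'M[R]_k) rho (mu : R) (v : 'rV[R]_k) :
  col_dominant M rho -> v != 0 -> v *m M = mu *: v -> 0 <= mu.
Proof.
move=> Mdom v_neq0 v_eig.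
have := @col_dominant_eigen_Re_ge0 k M rho mu%:C (map_mx (real_complex R) v) Mdom.
by rewrite map_mx_eq0 v_neq0 -map_mxM v_eig map_mxZ; apply.
Qed.

End Gershgorin.

(* The determinant of [s M + (1 - s) I] goes from [1] at [s = 0] to [\det M]
   at [s = 1]; a zero at [s] in (0, 1) gives the eigenvalue [-(1 - s) / s]. *)
Lemma det_lt0_neg_eigenvalue (R : rcfType) k (M : 'M[R]_k) :
  \det M < 0 -> exists2 mu, mu < 0 & eigenvalue M mu.
Proof.
move=> detM_lt0.
pose P := \det (\matrix_(i, j) ((M i j)%:P * 'X + ((i == j)%:R)%:P * (1 - 'X))).
have P_eval s : P.[s] = \det (s *: M + (1 - s) *: 1%:M).
  rewrite -horner_evalE -det_map_mx; congr (\det _); apply/matrixP => i j.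
  by rewrite !mxE -[LHS]/(((M i j)%:P * 'X + ((i == j)%:R)%:P * (1 - 'X)).[s]) !hornerE; ring.
have P0 : P.[0] = 1 by rewrite P_eval subr0 scale0r add0r scale1r det1.
have P1 : P.[1] = \det M by rewrite P_eval subrr scale0r addr0 scale1r.
have [s /andP[s_ge0 s_le1]] : exists2 s, 0 <= s <= 1 & root (- P) s.
  by apply: poly_ivt; rewrite ?ler01 // !hornerN P0 P1 lerN10 oppr_ge0 ltW.
rewrite rootE hornerN oppr_eq0 => /eqP Ps0.
have s_gt0 : 0 < s.
  by rewrite lt_def s_ge0 andbT; apply: contra_eq_neq Ps0 => ->; rewrite P0 oner_neq0.
have s_lt1 : s < 1.
  by rewrite lt_def s_le1 andbT eq_sym; apply: contra_eq_neq Ps0 => ->; rewrite P1 ltr0_neq0.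
move/eqP: Ps0; rewrite P_eval => /det0P[v v_neq0].
rewrite mulmxDr -!scalemxAr mulmx1 => /eqP; rewrite addr_eq0 => /eqP v_s.
exists (- ((1 - s) / s)); first by rewrite oppr_lt0 divr_gt0 // subr_gt0.
apply/eigenvalueP; exists v => //; apply: (scalerI (lt0r_neq0 s_gt0)).
by rewrite v_s scalerA mulrN mulrC divfK ?lt0r_neq0 // scaleNr.
Qed.

Lemma col_dominant_det_ge0 (R : rcfType) k (M : 'M[R]_k) rho :
  col_dominant M rho -> 0 <= \det M.
Proof.
move=> Mdom; rewrite leNgt; apply/negP => /det_lt0_neg_eigenvalue[mu mu_lt0].
case/eigenvalueP => v v_eig /(col_dominant_eigen_ge0 Mdom)/(_ v_eig).
by rewrite leNgt mu_lt0.
Qed.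

Section PrincipalMinors.
Variable R : realType.

Lemma col_dominant_principal_submx k (M : 'M[R]_k) rho (S : {set 'I_k}) :
  col_dominant M rho -> col_dominant (principal_submx M S) (fun a => rho (enum_val a)).
Proof.
move=> [rho_gt0 Mdom]; split=> // b.
rewrite [principal_submx M S b b]mxE; apply: le_trans (Mdom (enum_val b)).
have -> : \sum_(a | a != b) `|principal_submx M S a b| * rho (enum_val a)
    = \sum_(i in S | i != enum_val b) `|M i (enum_val b)| * rho i.
  rewrite big_enum_val_cond; apply: eq_big => a; first by rewrite (inj_eq enum_val_inj).
  by rewrite mxE.
rewrite [X in _ <= X]big_mkcond [X in X <= _]big_mkcond /=.
apply: ler_sum => i _; case: (i \in S) => //=; case: (i != _) => //.
by rewrite mulr_ge0 ?normr_ge0 ?ltW.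
Qed.

Lemma col_dominant_P0 k (M : 'M[R]_k) rho : col_dominant M rho -> P0_matrix M.
Proof. by move=> Mdom S; apply: col_dominant_det_ge0 (col_dominant_principal_submx S Mdom). Qed.

Lemma col_dominant_pos_semistable k (M : 'M[R]_k) rho :
  col_dominant M rho -> pos_semistable M.
Proof.
by move=> Mdom z /eigenvalueP[v v_eig v_neq0]; apply: col_dominant_eigen_Re_ge0 Mdom v_neq0 v_eig.
Qed.

End PrincipalMinors.

(** * The second additive compound *)

Lemma sum_idx2 (R : nmodType) n (F : 'I_n -> 'I_n -> R) :
  \sum_(x : idx2 n) F (val x).1 (val x).2
    = \sum_(i : 'I_n) \sum_(j : 'I_n) (if (i < j)%N then F i j else 0).
Proof.
rewrite pair_bigA /= -big_mkcond /=.
rewrite [RHS](reindex_omap (val : idx2 n -> 'I_n * 'I_n) insub) => [|p lt_p].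
  by apply: eq_bigl => -[p lt_p] /=; rewrite lt_p insubT /= eqxx.
by rewrite insubT.
Qed.

Lemma sum_idx2_sym (R : nmodType) n (F : 'I_n -> 'I_n -> R) :
  \sum_(x : idx2 n) (F (val x).1 (val x).2 + F (val x).2 (val x).1)
    = \sum_(i : 'I_n) \sum_(j | j != i) F i j.
Proof.
rewrite big_split /= (sum_idx2 F) (sum_idx2 (fun i j => F j i)) [X in _ + X]exchange_big /=.
rewrite -big_split; apply: eq_bigr => i _; rewrite -big_split [RHS]big_mkcond /=.
apply: eq_bigr => j _; rewrite eq_sym.
case: ltngtP => [ij|ji|/val_inj->]; rewrite ?eqxx ?addr0 ?add0r //.
  by rewrite -(inj_eq val_inj) (ltn_eqF ij).
by rewrite -(inj_eq val_inj) (gtn_eqF ji).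
Qed.

Lemma sum_if_eq (R : nmodType) (I : finType) (P : pred I) (l : I) (F : I -> R) :
  \sum_(j | P j) (if l == j then F j else 0) = if P l then F l else 0.
Proof.
rewrite -big_mkcondr; case: ifP => Pl.
  by rewrite (big_pred1 l) // => j; rewrite eq_sym /=; case: eqP => [->|]; rewrite ?andbF ?Pl.
by rewrite big_pred0 // => j; case: eqP => [<-|]; rewrite ?Pl ?andbF.
Qed.

Lemma sum_neq_sub_swap (R : zmodType) (I : finType) (F : I -> R) (a b : I) :
  \sum_(i | i != a) F i - F b = \sum_(i | i != b) F i - F a.
Proof.
have sum_neq c : \sum_(i | i != c) F i = \sum_i F i - F c.
  by rewrite [\sum_i F i](bigD1 c) //= addrAC subrr add0r.
by rewrite !sum_neq addrAC.
Qed.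

Section CompoundDominance.
Variables (R : realType) (n : nat) (M : 'M[R]_n) (rho : 'I_n -> R).
Hypothesis Mdom : col_dominant M rho.

Definition idx2_weight (x : idx2 n) : R := rho (val x).1 * rho (val x).2.

(* The weighted entry of [M^[2]] in row [e_i /\ e_j], column [e_k /\ e_l] is
   bounded by [compound2_bound k l i j + compound2_bound k l j i]; this split
   turns sums over pairs [i < j] into sums over all [i <> j]. *)
Definition compound2_bound (k l i j : 'I_n) : R :=
  rho i * rho j * ((if l == j then `|M i k| else 0) + (if k == j then `|M i l| else 0)).

Lemma norm_compound2_entry_le (x y : idx2 n) :
  `|compound2_entry M x y| * idx2_weight x
    <= compound2_bound (val y).1 (val y).2 (val x).1 (val x).2
     + compound2_bound (val y).1 (val y).2 (val x).2 (val x).1.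
Proof.
have [rho_gt0 _] := Mdom.
case: y => -[k l] kl; case: x => -[i j] ij; rewrite /idx2_weight /compound2_bound /compound2_entry /=.
rewrite [rho j * rho i]mulrC -mulrDr mulrC ler_pM2l ?mulr_gt0 //.
have norm_if (b : bool) (y : R) : `|if b then y else 0| = if b then `|y| else 0.
  by case: b; rewrite ?normr0.
rewrite -!norm_if.
set a := if l == j then _ else _; set b := if l == i then _ else _.
set c := if k == i then _ else _; set d := if k == j then _ else _.
have := ler_normB (a - b + c) d; have := ler_normD (a - b) c; have := ler_normB a b.
lra.
Qed.

Lemma sum_compound2_bound (k l : 'I_n) :
  \sum_(i : 'I_n) \sum_(j | j != i) compound2_bound k l i j
    = rho l * \sum_(i | i != l) `|M i k| * rho i + rho k * \sum_(i | i != k) `|M i l| * rho i.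
Proof.
rewrite !mulr_sumr [X in _ = X + _]big_mkcond [X in _ = _ + X]big_mkcond -big_split /=.
apply: eq_bigr => i _.
rewrite /compound2_bound (eq_bigr (fun j => (if l == j then rho i * rho l * `|M i k| else 0)
  + (if k == j then rho i * rho k * `|M i l| else 0))) => [|j _]; last first.
  by rewrite mulrDr; congr (_ + _); case: eqP => [->|]; rewrite ?mulr0.
rewrite big_split /= !sum_if_eq [l == i]eq_sym [k == i]eq_sym.
by congr (_ + _); case: ifP => // _; ring.
Qed.

Lemma compound2_entry_diag (y : idx2 n) :
  compound2_entry M y y = M (val y).1 (val y).1 + M (val y).2 (val y).2.
Proof.
case: y => -[k l] /= kl; have kl' : (k == l) = false by rewrite -val_eqE ltn_eqF.
by rewrite /compound2_entry /= !eqxx kl' eq_sym kl' !subr0.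
Qed.

Lemma compound2_col_dominant (y : idx2 n) :
  \sum_(x | x != y) `|compound2_entry M x y| * idx2_weight x
    <= compound2_entry M y y * idx2_weight y.
Proof.
have [rho_gt0 Mcol] := Mdom.
pose k := (val y).1; pose l := (val y).2.
have kl : (k == l) = false by rewrite -val_eqE ltn_eqF ?(valP y).
pose B (x : idx2 n) := compound2_bound k l (val x).1 (val x).2 + compound2_bound k l (val x).2 (val x).1.
apply: (@le_trans _ _ (\sum_(x | x != y) B x)).
  by apply: ler_sum => x _; apply: norm_compound2_entry_le.
have -> : \sum_(x | x != y) B x = \sum_x B x - B y.
  by rewrite [\sum_x B x](bigD1 y) //= addrAC subrr add0r.
rewrite sum_idx2_sym sum_compound2_bound compound2_entry_diag -/k -/l.
rewrite /B /compound2_bound /idx2_weight -/k -/l !eqxx kl eq_sym kl /= addr0 add0r.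
have off_k : rho l * (\sum_(i | i != l) `|M i k| * rho i - `|M k k| * rho k)
    <= rho l * (M k k * rho k).
  rewrite sum_neq_sub_swap ler_pM2l // lerBlDr (le_trans (Mcol k)) // lerDl.
  by rewrite mulr_ge0 ?normr_ge0 ?ltW.
have off_l : rho k * (\sum_(i | i != k) `|M i l| * rho i - `|M l l| * rho l)
    <= rho k * (M l l * rho l).
  rewrite sum_neq_sub_swap ler_pM2l // lerBlDr (le_trans (Mcol l)) // lerDl.
  by rewrite mulr_ge0 ?normr_ge0 ?ltW.
lra.
Qed.

Lemma col_dominant_compound2 :
  col_dominant (compound2 M) (fun a => idx2_weight (enum_val a)).
Proof.
have [rho_gt0 _] := Mdom; split=> [a|b]; first exact: mulr_gt0.
rewrite /compound2 mxE; under eq_bigr => a _ do rewrite mxE.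
apply: le_trans _ (compound2_col_dominant (enum_val b)).
rewrite [X in _ <= X](reindex (@enum_val _ {: idx2 n})) /=; last exact/onW_bij/enum_val_bij.
by under [X in _ <= X]eq_bigl => a do rewrite (inj_eq enum_val_inj).
Qed.

End CompoundDominance.

(** * Eigenvalues of products *)

Lemma eigenvalue_trmx (F : fieldType) k (M : 'M[F]_k) z :
  eigenvalue M z -> eigenvalue M^T z.
Proof.
case/eigenvalueP => v v_eig v_neq0.
have : \det (M - z%:M) == 0.
  by apply/det0P; exists v; rewrite // mulmxBr v_eig mul_mx_scalar subrr.
rewrite -det_tr linearB /= tr_scalar_mx => /det0P[w w_neq0].
rewrite mulmxBr mul_mx_scalar => /eqP; rewrite subr_eq0 => /eqP w_eig.
by apply/eigenvalueP; exists w.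
Qed.

Lemma eigenvalue_mulmxC (F : fieldType) p q (X : 'M[F]_(p, q)) (Y : 'M[F]_(q, p)) z :
  z != 0 -> eigenvalue (X *m Y) z -> eigenvalue (Y *m X) z.
Proof.
move=> z_neq0 /eigenvalueP[v v_eig v_neq0]; apply/eigenvalueP; exists (v *m X).
  by rewrite mulmxA -(mulmxA v) v_eig -scalemxAl.
apply: contra v_neq0 => /eqP vX0; move: v_eig; rewrite mulmxA vX0 mul0mx => /eqP.
by rewrite eq_sym scaler_eq0 (negbTE z_neq0).
Qed.

(* [X^T Y^T = (Y X)^T] has the same nonzero eigenvalues as [X Y]. *)
Lemma pos_semistable_trmx_mul (R : realType) p q (X : 'M[R]_(p, q)) (Y : 'M[R]_(q, p)) :
  pos_semistable (X^T *m Y^T) -> pos_semistable (X *m Y).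
Proof.
move=> XYT_semistable z z_eig; have [->|z_neq0] := eqVneq z 0; first by [].
apply: XYT_semistable; rewrite -trmx_mul -map_trmx map_mxM.
apply: eigenvalue_trmx; apply: (eigenvalue_mulmxC z_neq0).
by rewrite -map_mxM.
Qed.

Unset Implicit Arguments.

Theorem theorem6p2 (R : realType) (n m : nat) (A : 'M[R]_(n, m)) :
  (2 <= n)%N -> dsr_steady A A^T ->
  ((forall j : 'I_m, #|[set i : 'I_n | A i j != 0%R]| <= 2)%N ->
     forall B : 'M[R]_(m, n), signQ0 A^T B ->
       [/\ P0_matrix (A *m B), P0_matrix (compound2 (A *m B))
         & pos_semistable (A *m B)]) /\
  ((forall i : 'I_n, #|[set j : 'I_m | A i j != 0%R]| <= 2)%N ->
     forall B : 'M[R]_(m, n), signQ0 A^T B -> pos_semistable (A *m B)).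
Proof.
move=> _ /steady_unit_scaling[rho [sig As]]; split=> [col B sB | row B sB].
  have ABdom := col_dominant_mulmx As col sB.
  split; first exact: col_dominant_P0 ABdom.
    exact: col_dominant_P0 (col_dominant_compound2 ABdom).
  exact: col_dominant_pos_semistable ABdom.
have colT i : (#|[set j | A^T j i != 0%R]| <= 2)%N.
  by rewrite (eq_card (B := [set j | A i j != 0%R])) ?row // => j; rewrite !inE mxE.
apply/pos_semistable_trmx_mul/col_dominant_pos_semistable.
exact: col_dominant_mulmx (unit_scaling_tr As) colT (signQ0_tr sB).
Qed.
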